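(* Fix parameters $\gamma\in(0,1)$, $a\in(1,1/\gamma)$ and $\kappa\in(0,1]$. For large $T$, with $N=[T^{\kappa}]$ and with $f$, $\mathcal{M}$, $R$, $\Phi$ as defined in the context, \[ \int_{-\infty}^{\infty}|R(t)|^2\,\Phi\Big(\frac tT\Big)\,dt \ll T\sum_{n\in\mathcal{M}}f(n)^2, \] with an implied constant independent of $T$.
   Context: Write $\log_2x=\log\log x$, $\log_3 x=\log\log\log x$, and $\Phi(t):=e^{-t^2/2}$. Let $P$ be the set of primes $p$ with $e\log N\log_2N<p\le \log N\exp((\log_2N)^{\gamma})\log_2N$. Let $f$ be the multiplicative function supported on squarefree integers with $f(p)=\sqrt{\frac{\log N\log_2N}{\log_3N}}\cdot\frac{1}{\sqrt p(\log p-\log_2N-\log_3N)}$ for $p\in P$ and $f(p)=0$ for primes $p\notin P$. For $k=1,\dots,[(\log_2N)^{\gamma}]$ let $P_k$ be the set of primes with $e^k\log N\log_2N<p\le e^{k+1}\log N\log_2N$ and $M_k$ the set of integers having at least $\frac{a\log N}{k^2\log_3N}$ prime divisors in $P_k$; set $\mathcal{M}:=\operatorname{supp}(f)\setminus\bigcup_kM_k$. Let $\mathcal{J}$ be the set of integers $j$ such that $[(1+T^{-1})^j,(1+T^{-1})^{j+1})\cap\mathcal{M}\neq\emptyset$, let $m_j$ be the minimum of this intersection, $\mathcal{M}':=\{m_j:j\in\mathcal{J}\}$, and $r(m_j):=\big(\sum_{n\in\mathcal{M},\,(1+T^{-1})^{j-1}\le n\le(1+T^{-1})^{j+2}}f(n)^2\big)^{1/2}$.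 Finally $R(t):=\sum_{m\in\mathcal{M}'}r(m)m^{-it}$. *)

From Stdlib Require Import Reals Lra Lia ZArith Arith List Znumtheory ClassicalEpsilon.
From Coquelicot Require Import Coquelicot.
Import ListNotations.
Open Scope R_scope.

Definition dec (P : Prop) : bool :=
  if excluded_middle_informative P then true else false.
Definition ind (P : Prop) : R := if excluded_middle_informative P then 1 else 0.

Definition isprime (p : nat) : Prop := prime (Z.of_nat p).

(* log N, log_2 N = log log N, log_3 N = log log log N *)
Definition L1 (N : nat) : R := ln (INR N).
Definition L2 (N : nat) : R := ln (ln (INR N)).
Definition L3 (N : nat) : R := ln (ln (ln (INR N))).

Definition Nof (kappa T : R) : nat := Z.to_nat (Int_part (Rpower T kappa)).

Definition Uend (gamma : R) (N : nat) : R :=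
  L1 N * exp (Rpower (L2 N) gamma) * L2 N.

Definition inP (gamma : R) (N : nat) (p : nat) : Prop :=
  isprime p /\ exp 1 * L1 N * L2 N < INR p /\ INR p <= Uend gamma N.

Definition fp (gamma : R) (N : nat) (p : nat) : R :=
  if excluded_middle_informative (inP gamma N p) then
    sqrt (L1 N * L2 N / L3 N) / (sqrt (INR p) * (ln (INR p) - L2 N - L3 N))
  else 0.

Definition squarefree (n : nat) : Prop :=
  forall p, isprime p -> ~ Nat.divide (p * p) n.

Definition prime_divs (n : nat) : list nat :=
  filter (fun p => andb (dec (isprime p)) (Nat.eqb (n mod p) 0)) (seq 1 n).

(* f: the multiplicative function supported on squarefree integers with
   f(p) = fp p (fp vanishes off P); f(n) = prod_{p | n} f(p) for squarefree n >= 1. *)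
Definition fM (gamma : R) (N : nat) (n : nat) : R :=
  if Nat.eqb n 0 then 0 else
  if dec (squarefree n) then fold_right Rmult 1 (map (fp gamma N) (prime_divs n))
  else 0.

Definition Kmax (gamma : R) (N : nat) : nat := Z.to_nat (Int_part (Rpower (L2 N) gamma)).

Definition inPk (N k p : nat) : Prop :=
  isprime p /\ exp (INR k) * L1 N * L2 N < INR p /\
  INR p <= exp (INR k + 1) * L1 N * L2 N.

Definition cntPk (N k n : nat) : nat :=
  length (filter (fun p => dec (inPk N k p)) (prime_divs n)).

Definition inMk (a : R) (N k n : nat) : Prop :=
  INR (cntPk N k n) >= a * L1 N / (INR k ^ 2 * L3 N).

Definition inM (gamma a : R) (N n : nat) : Prop :=
  fM gamma N n <> 0 /\
  forall k : nat, (1 <= k <= Kmax gamma N)%nat -> ~ inMk a N k n.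

(* Every element of supp(f) is a product of distinct primes <= Uend, hence
   is <= (ceil Uend)!; all finite sums over calM are taken over n = 0..Bnd. *)
Definition Bnd (gamma : R) (N : nat) : nat := fact (Z.to_nat (up (Uend gamma N))).

Definition sumM (gamma a : R) (N : nat) (g : nat -> R) : R :=
  sum_f_R0 (fun n => ind (inM gamma a N n) * g n) (Bnd gamma N).

Definition qT (T : R) : R := 1 + / T.
Definition in_block (T : R) (j : Z) (n : nat) : Prop :=
  powerRZ (qT T) j <= INR n < powerRZ (qT T) (j + 1).

Definition inM' (gamma a : R) (N : nat) (T : R) (m : nat) : Prop :=
  inM gamma a N m /\
  exists j : Z, in_block T j m /\
    forall n, inM gamma a N n -> in_block T j n -> (m <= n)%nat.

Definition rr (gamma a : R) (N : nat) (T : R) (m : nat) : R :=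
  sqrt (sumM gamma a N (fun n =>
     ind (exists j : Z, in_block T j m /\
            powerRZ (qT T) (j - 1) <= INR n <= powerRZ (qT T) (j + 2))
     * fM gamma N n ^ 2)).

Definition mpow (m : nat) (t : R) : C :=
  (cos (t * ln (INR m)), - sin (t * ln (INR m)))%R.

Definition Rsum (gamma a : R) (N : nat) (T : R) (t : R) : C :=
  sum_n (fun m => Cmult (RtoC (ind (inM' gamma a N T m) * rr gamma a N T m)) (mpow m t))
        (Bnd gamma N).

Definition Phi (t : R) : R := exp (- t ^ 2 / 2).

Definition integrand (gamma a kappa T : R) (t : R) : R :=
  (Cmod (Rsum gamma a (Nof kappa T) T t)) ^ 2 * Phi (t / T).

From Stdlib Require Import Reals Lra Lia ZArith Classical ClassicalEpsilon.
From Coquelicot Require Import Coquelicot.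
Open Scope R_scope.

(* Expanding the square, the integral of |R(t)|^2 Phi(t/T) is the double sum over m, m' in
   calM' of r(m) r(m') times the Fourier transform of Phi(t/T) at log m - log m'.  Two
   integrations by parts bound this transform by O(T / (1 + (j - j')^2)), where j, j' are the
   blocks of m and m': blocks have logarithmic width log(1 + 1/T) >= 1/(T + 1) and contain at
   most one point of calM'.  Schur's test then bounds the double sum by O(T) sum r(m)^2, and
   since every n in calM enters r(m)^2 for at most four m, sum r(m)^2 <= 4 sum f(n)^2.  The
   improper integral is reached by truncating to [-A, A], the boundary terms of the
   integration by parts decaying like Phi(A/T). *)


Lemma ind_nonneg P : 0 <= ind P.
Proof. unfold ind; destruct excluded_middle_informative; lra. Qed.

Lemma ind_le_1 P : ind P <= 1.
Proof. unfold ind; destruct excluded_middle_informative; lra. Qed.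

Lemma ind_true (P : Prop) : P -> ind P = 1.
Proof. unfold ind; destruct excluded_middle_informative; tauto. Qed.

Lemma ind_false (P : Prop) : ~ P -> ind P = 0.
Proof. unfold ind; destruct excluded_middle_informative; tauto. Qed.

Lemma ind_and P Q : ind P * ind Q = ind (P /\ Q).
Proof. unfold ind; repeat destruct excluded_middle_informative; try tauto; lra. Qed.

Lemma sum_f_R0_swap (u : nat -> nat -> R) n k :
  sum_f_R0 (fun i => sum_f_R0 (u i) k) n = sum_f_R0 (fun j => sum_f_R0 (fun i => u i j) n) k.
Proof.
  rewrite <- sum_n_Reals, <- (sum_n_Reals _ k).
  transitivity (sum_n (fun i => sum_n (u i) k) n).
  - apply sum_n_ext. intros i. now rewrite sum_n_Reals.
  - rewrite sum_n_switch. apply sum_n_ext. intros j. now rewrite sum_n_Reals.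
Qed.

Lemma sum_f_R0_mult (a b : nat -> R) n :
  sum_f_R0 a n * sum_f_R0 b n = sum_f_R0 (fun i => sum_f_R0 (fun j => a i * b j) n) n.
Proof.
  rewrite Rmult_comm, scal_sum. apply sum_eq; intros i _.
  rewrite scal_sum. apply sum_eq; intros; ring.
Qed.

Lemma sum_f_R0_term_le (a : nat -> R) n k :
  (forall i, 0 <= a i) -> (k <= n)%nat -> a k <= sum_f_R0 a n.
Proof.
  intros ha. induction n as [|n IH]; intros hk; simpl.
  - replace k with 0%nat by lia; lra.
  - destruct (Nat.eq_dec k (S n)) as [->|hne].
    + pose proof (cond_pos_sum a n ha). lra.
    + pose proof (IH ltac:(lia)). pose proof (ha (S n)). lra.
Qed.

Lemma sum_ind_le_1 B (Q : nat -> Prop) :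
  (forall m m', (m <= B)%nat -> (m' <= B)%nat -> Q m -> Q m' -> m = m') ->
  sum_f_R0 (fun m => ind (Q m)) B <= 1.
Proof.
  induction B as [|B IH]; intros huniq; simpl; [apply ind_le_1|].
  destruct (classic (Q (S B))) as [hq|hq].
  - assert (hnone : sum_f_R0 (fun m => ind (Q m)) B = 0).
    { apply sum_eq_R0. intros i hi. apply ind_false. intros hqi.
      pose proof (huniq i (S B) ltac:(lia) ltac:(lia) hqi hq). lia. }
    rewrite hnone, (ind_true _ hq). lra.
  - rewrite (ind_false _ hq), Rplus_0_r. apply IH. intros; apply huniq; auto; lia.
Qed.

Lemma sum_ind_reindex_le B (P : nat -> Prop) (j : nat -> Z) (lo : Z) (L : nat) (g : Z -> R) :
  (forall m, (m <= B)%nat -> P m -> (lo <= j m <= lo + Z.of_nat L)%Z) ->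
  (forall m m', (m <= B)%nat -> (m' <= B)%nat -> P m -> P m' -> j m = j m' -> m = m') ->
  (forall k, 0 <= g k) ->
  sum_f_R0 (fun m => ind (P m) * g (j m)) B <= sum_f_R0 (fun i => g (lo + Z.of_nat i)%Z) L.
Proof.
  intros hrange hinj hg.
  set (hit := fun m i => P m /\ j m = (lo + Z.of_nat i)%Z).
  apply Rle_trans with
    (sum_f_R0 (fun m => sum_f_R0 (fun i => ind (hit m i) * g (lo + Z.of_nat i)%Z) L) B).
  - apply sum_Rle. intros m hm.
    destruct (classic (P m)) as [hp|hp].
    + pose proof (hrange m hm hp).
      set (i0 := Z.to_nat (j m - lo)).
      assert (e : j m = (lo + Z.of_nat i0)%Z) by (unfold i0; lia).
      eapply Rle_trans; [|apply (sum_f_R0_term_le _ L i0)].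
      * rewrite !ind_true by (try split; auto). rewrite <- e. lra.
      * intros; apply Rmult_le_pos; [apply ind_nonneg | apply hg].
      * unfold i0; lia.
    + rewrite ind_false, Rmult_0_l by auto. apply cond_pos_sum.
      intros; apply Rmult_le_pos; [apply ind_nonneg | apply hg].
  - rewrite sum_f_R0_swap. apply sum_Rle. intros i hi.
    rewrite <- scal_sum. rewrite <- (Rmult_1_r (g (lo + Z.of_nat i)%Z)) at 2.
    apply Rmult_le_compat_l; [apply hg|].
    apply sum_ind_le_1. intros m m' hm hm' [h1 e1] [h2 e2]. apply hinj; auto; congruence.
Qed.

(* [c m c m' K <= (c m^2 + c m'^2) K / 2], and each half is bounded row by row. *)
Lemma schur_test B (P : nat -> Prop) (c : nat -> R) (K : nat -> nat -> R) S :
  (forall m, ~ P m -> c m = 0) -> (forall m m', 0 <= K m m') -> (forall m m', K m m' = K m' m) ->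
  (forall m, (m <= B)%nat -> P m -> sum_f_R0 (fun m' => ind (P m') * K m m') B <= S) ->
  sum_f_R0 (fun m => sum_f_R0 (fun m' => c m * c m' * K m m') B) B
  <= S * sum_f_R0 (fun m => c m ^ 2) B.
Proof.
  intros hc hK hsym hrow.
  set (X := fun m m' => c m ^ 2 * (ind (P m') * K m m') / 2).
  apply Rle_trans with (sum_f_R0 (fun m => sum_f_R0 (fun m' => X m m' + X m' m) B) B).
  { apply sum_Rle; intros m _; apply sum_Rle; intros m' _. unfold X. rewrite (hsym m' m).
    pose proof (hK m m').
    destruct (classic (P m)) as [h1|h1]; destruct (classic (P m')) as [h2|h2].
    - rewrite !ind_true by auto.
      pose proof (Rmult_le_pos _ _ (pow2_ge_0 (c m - c m')) (hK m m')). nra.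
    - rewrite (hc m'), (ind_false (P m')) by auto. pose proof (ind_nonneg (P m)). nra.
    - rewrite (hc m), (ind_false (P m)) by auto. pose proof (ind_nonneg (P m')). nra.
    - rewrite (hc m), (hc m') by auto. nra. }
  rewrite (sum_eq _ _ _ (fun m _ => sum_plus (X m) (fun m' => X m' m) B)), sum_plus.
  rewrite (sum_f_R0_swap (fun m m' => X m' m)).
  assert (hrowX : forall m, (m <= B)%nat -> sum_f_R0 (X m) B <= c m ^ 2 / 2 * S).
  { intros m hm.
    replace (sum_f_R0 (X m) B)
      with (c m ^ 2 / 2 * sum_f_R0 (fun m' => ind (P m') * K m m') B)
      by (rewrite scal_sum; apply sum_eq; intros; unfold X; field).
    destruct (classic (P m)) as [hp|hp].
    - apply Rmult_le_compat_l; [pose proof (pow2_ge_0 (c m)); lra | auto].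
    - rewrite (hc m hp). lra. }
  pose proof (sum_Rle _ _ B hrowX) as hsum.
  replace (sum_f_R0 (fun m => c m ^ 2 / 2 * S) B) with (S * sum_f_R0 (fun m => c m ^ 2) B / 2)
    in hsum by (rewrite scal_sum; unfold Rdiv; rewrite Rmult_comm, scal_sum;
                apply sum_eq; intros; ring).
  change (fun j => sum_f_R0 (fun i => X j i) B) with (fun l => sum_f_R0 (X l) B). lra.
Qed.

(* Telescoping against [x / (|x| + 1)], which increases by at least [1/(3(1+z^2))] on [z, z+1]. *)
Lemma sum_inv_1_plus_sq_le (a : Z) L :
  sum_f_R0 (fun i => 1 / (1 + IZR (a + Z.of_nat i) ^ 2)) L <= 6.
Proof.
  set (F := fun x => x / (Rabs x + 1)).
  assert (hF : forall x, Rabs (F x) < 1).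
  { intros x. unfold F. pose proof (Rabs_pos x). unfold Rdiv.
    rewrite Rabs_mult, Rabs_inv, (Rabs_pos_eq (Rabs x + 1)) by lra.
    apply Rmult_lt_reg_r with (Rabs x + 1); [lra|]. rewrite Rmult_assoc, Rinv_l by lra. lra. }
  assert (hinc : forall D x, 0 < D -> D <= 3 * (1 + x^2) -> 1 / (1 + x^2) <= 3 / D).
  { intros D x hD hle. assert (0 < 1 + x^2) by nra.
    apply Rmult_le_reg_r with (D * (1 + x^2)); [nra|].
    replace (1 / (1 + x^2) * (D * (1 + x^2))) with D by (field; lra).
    replace (3 / D * (D * (1 + x^2))) with (3 * (1 + x^2)) by (field; lra). lra. }
  assert (hstep : forall z : Z, 1 / (1 + IZR z ^ 2) <= 3 * (F (IZR z + 1) - F (IZR z))).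
  { intros z. unfold F. destruct (Z_lt_le_dec z 0) as [hz|hz].
    - assert (hx : IZR z <= -1) by (apply IZR_le; lia). set (x := IZR z) in *.
      rewrite (Rabs_left x), (Rabs_left1 (x + 1)) by lra.
      replace (3 * ((x + 1) / (- (x + 1) + 1) - x / (- x + 1))) with (3 / (x * (x - 1)))
        by (field; lra).
      apply hinc; nra.
    - assert (hx : IZR z = 0 \/ 1 <= IZR z).
      { destruct (Z.eq_dec z 0) as [->|hne]; [left; reflexivity | right; apply IZR_le; lia]. }
      set (x := IZR z) in *.
      rewrite (Rabs_pos_eq x), (Rabs_pos_eq (x + 1)) by lra.
      replace (3 * ((x + 1) / (x + 1 + 1) - x / (x + 1))) with (3 / ((x + 1) * (x + 2)))
        by (field; lra).
      apply hinc; destruct hx; nra. }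
  apply Rle_trans with (3 * (F (IZR a + INR L + 1) - F (IZR a))).
  - induction L as [|L IH].
    + simpl. rewrite Z.add_0_r. replace (IZR a + 0 + 1) with (IZR a + 1) by ring. apply hstep.
    + rewrite tech5. pose proof (hstep (a + Z.of_nat (S L))%Z) as h.
      rewrite plus_IZR, <- INR_IZR_INZ, S_INR in h |- *.
      replace (IZR a + (INR L + 1)) with (IZR a + INR L + 1) in h |- * by ring. lra.
  - pose proof (hF (IZR a + INR L + 1)) as h1. pose proof (hF (IZR a)) as h2.
    apply Rabs_def2 in h1. apply Rabs_def2 in h2. lra.
Qed.

(** * Improper integrals of nonnegative functions *)

Lemma RInt_nonneg_subinterval (h : R -> R) (a c d b : R) :
  (forall x y, ex_RInt h x y) -> (forall t, 0 <= h t) ->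
  a <= c -> c <= d -> d <= b -> RInt h c d <= RInt h a b.
Proof.
  intros hex hpos hac hcd hdb.
  rewrite <- (RInt_Chasles h a c b (hex _ _) (hex _ _)),
          <- (RInt_Chasles h c d b (hex _ _) (hex _ _)).
  assert (0 <= RInt h a c) by (apply RInt_ge_0; auto).
  assert (0 <= RInt h d b) by (apply RInt_ge_0; auto).
  change (RInt h c d <= RInt h a c + (RInt h c d + RInt h d b)). lra.
Qed.

Lemma is_RInt_gen_nonneg_le (h : R -> R) (M : R) :
  (forall a b, ex_RInt h a b) -> (forall t, 0 <= h t) ->
  (forall a b, a <= b -> RInt h a b <= M) ->
  exists I, is_RInt_gen h (Rbar_locally m_infty) (Rbar_locally p_infty) I /\ I <= M.
Proof.
  intros hex hpos hb.
  set (E := fun y => exists a b, a <= b /\ y = RInt h a b).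
  assert (bE : bound E) by (exists M; intros y [a [b [hab ->]]]; auto).
  assert (nE : exists y, E y) by (exists (RInt h 0 0); exists 0, 0; split; [lra|auto]).
  destruct (completeness E bE nE) as [I [Iub Ilub]].
  exists I; split.
  2: { apply Ilub. intros y [a [b [hab ->]]]; auto. }
  intros P [eps Heps].
  assert (exists a0 b0, a0 <= b0 /\ I - eps < RInt h a0 b0) as [a0 [b0 [hab0 hgt]]].
  { apply NNPP; intro hn.
    assert (I <= I - eps).
    { apply Ilub. intros y [a [b [hab ->]]].
      apply Rnot_lt_le; intro hl; apply hn; exists a, b; auto. }
    destruct eps; simpl in *; lra. }
  apply Filter_prod with (fun a => a < a0) (fun b => b0 < b); [exists a0; auto | exists b0; auto |].
  intros a b ha hb'. exists (RInt h a b). split; [exact (RInt_correct h a b (hex a b)) |].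
  apply Heps.
  assert (RInt h a b <= I) by (apply Iub; exists a, b; split; [lra|auto]).
  assert (RInt h a0 b0 <= RInt h a b) by (apply RInt_nonneg_subinterval; auto; lra).
  change (Rabs (RInt h a b - I) < eps). apply Rabs_def1; lra.
Qed.

Lemma is_RInt_gen_nonneg_le_symmetric (h : R -> R) (M E : R) :
  (forall a b, ex_RInt h a b) -> (forall t, 0 <= h t) ->
  (forall A, 1 <= A -> RInt h (-A) A <= M + E / A) ->
  exists I, is_RInt_gen h (Rbar_locally m_infty) (Rbar_locally p_infty) I /\ I <= M.
Proof.
  intros hex hpos hsym.
  apply is_RInt_gen_nonneg_le; auto.
  intros a b hab. apply le_epsilon. intros eps heps.
  set (A := 1 + Rabs a + Rabs b + Rabs E / eps).
  assert (hEe : 0 <= Rabs E / eps) by (apply Rdiv_le_0_compat; [apply Rabs_pos | lra]).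
  pose proof (Rabs_pos a). pose proof (Rabs_pos b).
  assert (hA : 1 <= A) by (unfold A; lra).
  assert (hEA : E / A <= eps).
  { apply Rle_div_l; [lra|]. apply Rle_trans with (Rabs E); [apply Rle_abs|].
    assert (hE : Rabs E / eps * eps <= A * eps) by (apply Rmult_le_compat_r; unfold A; lra).
    replace (Rabs E / eps * eps) with (Rabs E) in hE by (field; lra). lra. }
  eapply Rle_trans; [apply (RInt_nonneg_subinterval h (-A) a b A); auto|].
  - pose proof (Rle_abs (-a)). rewrite Rabs_Ropp in *. unfold A; lra.
  - pose proof (Rle_abs b). unfold A; lra.
  - pose proof (hsym A hA). lra.
Qed.

Lemma Phi_pos u : 0 < Phi u.
Proof. apply exp_pos. Qed.

Lemma Phi_opp u : Phi (- u) = Phi u.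
Proof. unfold Phi. replace ((- u) ^ 2) with (u ^ 2) by ring. reflexivity. Qed.

(* From [exp w >= (1 + w/2)^2] with [w = u^2/2]. *)
Lemma Phi_mul_sq_le u : (1 + u^2) * (1 + u^2) * Phi u <= 16.
Proof.
  unfold Phi. set (w := u^2/2).
  assert (hw : 0 <= w) by (unfold w; nra).
  replace (- u ^ 2 / 2) with (- w) by (unfold w; field).
  rewrite exp_Ropp.
  assert (e1 : 1 + w/2 <= exp (w/2)) by apply exp_ineq1_le.
  assert (e2 : exp w = exp (w/2) * exp (w/2)) by (rewrite <- exp_plus; f_equal; field).
  assert (e3 : (1 + w/2) * (1 + w/2) <= exp w) by (rewrite e2; apply Rmult_le_compat; lra).
  assert (e4 : (1+u^2)*(1+u^2) <= 16 * ((1 + w/2) * (1 + w/2))) by (unfold w; nra).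
  assert (0 < exp w) by apply exp_pos.
  apply (Rmult_le_reg_r (exp w)); auto.
  rewrite Rmult_assoc, Rinv_l by lra. nra.
Qed.

Lemma Phi_mul_le u : (1 + u^2) * Phi u <= 16 / (1 + u^2).
Proof.
  pose proof (Phi_mul_sq_le u). assert (0 < 1 + u^2) by nra.
  apply (Rmult_le_reg_r (1 + u^2)); [lra|].
  replace (16 / (1 + u^2) * (1 + u^2)) with 16 by (field; lra). lra.
Qed.

Lemma Phi_le u : Phi u <= 16 / (1 + u^2).
Proof.
  pose proof (Phi_mul_le u). pose proof (Phi_pos u). assert (0 < 1 + u^2) by nra. nra.
Qed.

(** * Oscillatory integrals *)

Lemma abs_RInt_le_cauchy (f : R -> R) (T A c : R) : 0 < T -> 0 <= A -> 0 <= c ->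
  ex_RInt f (-A) A -> (forall t, Rabs (f t) <= c / (1 + (t / T)^2)) ->
  Rabs (RInt f (-A) A) <= PI * c * T.
Proof.
  intros hT hA hc hf hbd.
  assert (hint : is_RInt (fun t => c / (1 + (t / T)^2)) (-A) A
                   (minus (c * T * atan (A / T)) (c * T * atan (- A / T)))).
  { apply (is_RInt_derive (fun t => c * T * atan (t / T))).
    - intros t _.
      pose proof (is_derive_comp atan (fun t => t / T) t _ _ (is_derive_atan (t / T))
                    ltac:(auto_derive; [lra | reflexivity])) as h.
      replace (c / (1 + (t / T)^2)) with (c * T * (1 * / T * / (1 + (t / T)²)))
        by (unfold Rsqr; field; split; [lra | nra]).
      exact (is_derive_scal _ t (c * T) _ h).
    - intros t _. apply (ex_derive_continuous (K:=R_AbsRing) (V:=R_NormedModule)).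
      auto_derive. nra. }
  eapply Rle_trans.
  - exact (norm_RInt_le f _ (-A) A _ _ ltac:(lra) (fun t _ => hbd t) (RInt_correct _ _ _ hf) hint).
  - change (c * T * atan (A / T) - c * T * atan (- A / T) <= PI * c * T).
    pose proof (atan_bound (A / T)). pose proof (atan_bound (- A / T)).
    assert (0 <= c * T) by nra. nra.
Qed.

Definition cos_Phi (T x t : R) : R := cos (x * t) * Phi (t / T).

Lemma ex_RInt_cos_Phi T x a b : 0 < T -> ex_RInt (cos_Phi T x) a b.
Proof.
  intros hT. apply (ex_RInt_continuous (V:=R_CompleteNormedModule)). intros t _.
  apply (ex_derive_continuous (K:=R_AbsRing) (V:=R_NormedModule)).
  unfold cos_Phi, Phi. auto_derive. lra.
Qed.

Lemma abs_RInt_cos_Phi_le T x A : 0 < T -> 0 <= A ->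
  Rabs (RInt (cos_Phi T x) (-A) A) <= 16 * PI * T.
Proof.
  intros hT hA.
  replace (16 * PI * T) with (PI * 16 * T) by ring.
  apply abs_RInt_le_cauchy; auto; [lra | apply ex_RInt_cos_Phi; auto |].
  intros t. unfold cos_Phi. rewrite Rabs_mult, (Rabs_pos_eq (Phi _)) by (left; apply Phi_pos).
  pose proof (Phi_le (t / T)). pose proof (Phi_pos (t / T)).
  assert (Rabs (cos (x * t)) <= 1) by (apply Rabs_le; apply COS_bound).
  pose proof (Rabs_pos (cos (x * t))). nra.
Qed.

Lemma cos_Phi_primitive_bound T x t : 0 < T -> x <> 0 ->
  Rabs ((sin (x * t) / x - cos (x * t) * t / (T^2 * x^2)) * Phi (t / T))
  <= (/ Rabs x + Rabs t / (T^2 * x^2)) * Phi (t / T).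
Proof.
  intros hT hx. pose proof (Phi_pos (t / T)).
  rewrite Rabs_mult, (Rabs_pos_eq (Phi _)) by lra.
  apply Rmult_le_compat_r; [lra|].
  eapply Rle_trans; [apply Rabs_triang|]. rewrite Rabs_Ropp.
  assert (hTx : 0 < T^2 * x^2)
    by (apply Rmult_lt_0_compat; rewrite <- !Rsqr_pow2; apply Rsqr_pos_lt; lra).
  unfold Rdiv. rewrite !Rabs_mult, Rabs_inv, (Rabs_pos_eq (/ (T^2 * x^2)))
    by (left; apply Rinv_0_lt_compat; auto).
  assert (Rabs (sin (x * t)) <= 1) by (apply Rabs_le; apply SIN_bound).
  assert (Rabs (cos (x * t)) <= 1) by (apply Rabs_le; apply COS_bound).
  pose proof (Rabs_pos (sin (x * t))). pose proof (Rabs_pos (cos (x * t))). pose proof (Rabs_pos t).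
  assert (0 < / Rabs x) by (apply Rinv_0_lt_compat, Rabs_pos_lt; auto).
  assert (0 < / (T^2 * x^2)) by (apply Rinv_0_lt_compat; auto).
  apply Rplus_le_compat; [nra|].
  assert (0 <= Rabs t * / (T^2 * x^2)) by (apply Rmult_le_pos; lra). nra.
Qed.

(* [G] is a primitive of [cos_Phi T x * (1 + k)], found by integrating by parts twice, and the
   remainder [cos_Phi T x * k] carries the factor [1 / (T x)^2]. *)
Lemma abs_RInt_cos_Phi_le_ibp T x A : 0 < T -> 0 <= A -> x <> 0 ->
  Rabs (RInt (cos_Phi T x) (-A) A)
  <= 16 * PI / (T * x^2) + 2 * ((/ Rabs x + A / (T^2 * x^2)) * Phi (A / T)).
Proof.
  intros hT hA hx.
  assert (hx2 : 0 < x^2) by (rewrite <- Rsqr_pow2; apply Rsqr_pos_lt; auto).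
  assert (hTx : 0 < T^2 * x^2) by (apply Rmult_lt_0_compat; nra).
  set (G := fun t => (sin (x * t) / x - cos (x * t) * t / (T^2 * x^2)) * Phi (t / T)).
  set (k := fun t => ((t / T)^2 - 1) / (T^2 * x^2)).
  assert (hG : is_RInt (fun t => cos_Phi T x t * (1 + k t)) (-A) A (minus (G A) (G (-A)))).
  { apply (is_RInt_derive (V:=R_CompleteNormedModule) G).
    - intros t _. unfold G, cos_Phi, k, Phi. auto_derive; [repeat split; lra|].
      replace (exp (- (t * / T * (t * / T * 1)) * / 2)) with (exp (- (t / T) ^ 2 / 2))
        by (f_equal; field; lra).
      field. split; lra.
    - intros t _. apply (ex_derive_continuous (K:=R_AbsRing) (V:=R_NormedModule)).
      unfold cos_Phi, k, Phi. auto_derive. split; lra. }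
  set (J := RInt (fun t => cos_Phi T x t * k t) (-A) A).
  assert (hexJ : ex_RInt (fun t => cos_Phi T x t * k t) (-A) A).
  { apply (ex_RInt_continuous (V:=R_CompleteNormedModule)). intros t _.
    apply (ex_derive_continuous (K:=R_AbsRing) (V:=R_NormedModule)).
    unfold cos_Phi, k, Phi. auto_derive. split; lra. }
  assert (e : RInt (cos_Phi T x) (-A) A = G A - G (-A) - J).
  { apply is_RInt_unique.
    apply is_RInt_ext with (fun t => minus (cos_Phi T x t * (1 + k t)) (cos_Phi T x t * k t)).
    - intros t _. unfold minus, plus, opp; simpl. ring.
    - exact (is_RInt_minus _ _ _ _ _ _ hG (RInt_correct _ _ _ hexJ)). }
  assert (hJ : Rabs J <= 16 * PI / (T * x^2)).
  { replace (16 * PI / (T * x^2)) with (PI * (16 / (T^2 * x^2)) * T) by (field; lra).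
    apply abs_RInt_le_cauchy; auto.
    - apply Rdiv_le_0_compat; lra.
    - intros t. unfold cos_Phi, k. set (u := t / T).
      replace (cos (x * t) * Phi u * ((u^2 - 1) / (T^2 * x^2)))
        with (cos (x * t) * Phi u * (u^2 - 1) * / (T^2 * x^2)) by (unfold Rdiv; ring).
      replace (16 / (T^2 * x^2) / (1 + u^2)) with (16 / (1 + u^2) * / (T^2 * x^2)) by (field; nra).
      rewrite Rabs_mult, (Rabs_pos_eq (/ _)) by (left; apply Rinv_0_lt_compat; auto).
      apply Rmult_le_compat_r; [left; apply Rinv_0_lt_compat; auto|].
      rewrite !Rabs_mult, (Rabs_pos_eq (Phi _)) by (left; apply Phi_pos).
      assert (Rabs (cos (x * t)) <= 1) by (apply Rabs_le; apply COS_bound).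
      pose proof (Rabs_pos (cos (x * t))).
      pose proof (Phi_mul_le u). pose proof (Phi_pos u).
      assert (Rabs (u^2 - 1) <= 1 + u^2) by (apply Rabs_le; nra).
      pose proof (Rabs_pos (u^2 - 1)).
      assert (Phi u * Rabs (u^2 - 1) <= (1 + u^2) * Phi u) by nra.
      assert (0 <= Phi u * Rabs (u^2 - 1)) by nra. nra. }
  assert (hGA : Rabs (G A) <= (/ Rabs x + A / (T^2 * x^2)) * Phi (A / T)).
  { unfold G. eapply Rle_trans; [apply cos_Phi_primitive_bound; auto|].
    rewrite (Rabs_pos_eq A) by lra. lra. }
  assert (hGB : Rabs (G (-A)) <= (/ Rabs x + A / (T^2 * x^2)) * Phi (A / T)).
  { unfold G. eapply Rle_trans; [apply cos_Phi_primitive_bound; auto|].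
    rewrite Rabs_Ropp, (Rabs_pos_eq A), Rdiv_opp_l, Phi_opp by lra. lra. }
  rewrite e. unfold Rminus.
  eapply Rle_trans; [apply Rabs_triang|]. rewrite Rabs_Ropp.
  eapply Rle_trans; [apply Rplus_le_compat_r, Rabs_triang|]. rewrite Rabs_Ropp. lra.
Qed.

(** * Dirichlet polynomials *)

Definition dirichlet_poly (c : nat -> R) (B : nat) (t : R) : C :=
  sum_n (fun m => Cmult (RtoC (c m)) (mpow m t)) B.

Lemma sum_n_C (f : nat -> C) n :
  sum_n f n = (sum_f_R0 (fun m => fst (f m)) n, sum_f_R0 (fun m => snd (f m)) n).
Proof.
  induction n as [|n IH].
  - rewrite sum_O. simpl. destruct (f 0%nat); reflexivity.
  - rewrite sum_Sn, IH. simpl. destruct (f (S n)); reflexivity.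
Qed.

Lemma Cmod_dirichlet_poly_sq c B t :
  Cmod (dirichlet_poly c B t) ^ 2 =
  sum_f_R0 (fun m => sum_f_R0 (fun m' =>
    c m * c m' * cos ((ln (INR m) - ln (INR m')) * t)) B) B.
Proof.
  unfold dirichlet_poly. rewrite sum_n_C. unfold Cmod. simpl fst; simpl snd.
  rewrite pow2_sqrt by nra.
  replace (sum_f_R0 (fun m => c m * cos (t * ln (INR m)) - 0 * - sin (t * ln (INR m))) B)
    with (sum_f_R0 (fun m => c m * cos (t * ln (INR m))) B) by (apply sum_eq; intros; ring).
  replace (sum_f_R0 (fun m => c m * - sin (t * ln (INR m)) + 0 * cos (t * ln (INR m))) B)
    with (- sum_f_R0 (fun m => c m * sin (t * ln (INR m))) B)
    by (rewrite <- (Rmult_1_l (sum_f_R0 _ B)), Ropp_mult_distr_l, scal_sum;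
        apply sum_eq; intros; ring).
  replace ((- sum_f_R0 (fun m => c m * sin (t * ln (INR m))) B) ^ 2)
    with ((sum_f_R0 (fun m => c m * sin (t * ln (INR m))) B) ^ 2) by ring.
  rewrite <- !Rsqr_pow2. unfold Rsqr. rewrite !sum_f_R0_mult, <- sum_plus.
  apply sum_eq; intros i _. rewrite <- sum_plus. apply sum_eq; intros j _.
  replace ((ln (INR i) - ln (INR j)) * t) with (t * ln (INR i) - t * ln (INR j)) by ring.
  rewrite cos_minus. ring.
Qed.

Lemma is_RInt_sum_f_R0 (f : nat -> R -> R) (I : nat -> R) a b n :
  (forall i, (i <= n)%nat -> is_RInt (f i) a b (I i)) ->
  is_RInt (fun t => sum_f_R0 (fun i => f i t) n) a b (sum_f_R0 I n).
Proof.
  induction n as [|n IH]; intros h; simpl; [apply h; lia|].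
  apply (is_RInt_plus (V:=R_NormedModule) (fun t => sum_f_R0 (fun i => f i t) n) (f (S n))).
  - apply IH; intros; apply h; lia.
  - apply h; lia.
Qed.

Lemma is_RInt_dirichlet_poly_sq_Phi T c B a b : 0 < T ->
  is_RInt (fun t => Cmod (dirichlet_poly c B t) ^ 2 * Phi (t / T)) a b
    (sum_f_R0 (fun m => sum_f_R0 (fun m' =>
       c m * c m' * RInt (cos_Phi T (ln (INR m) - ln (INR m'))) a b) B) B).
Proof.
  intros hT.
  apply is_RInt_ext with (fun t => sum_f_R0 (fun m => sum_f_R0 (fun m' =>
    c m * c m' * cos_Phi T (ln (INR m) - ln (INR m')) t) B) B).
  { intros t _. rewrite Cmod_dirichlet_poly_sq, (Rmult_comm (sum_f_R0 _ B)), scal_sum.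
    apply sum_eq; intros m _. rewrite (Rmult_comm _ (Phi _)), scal_sum.
    apply sum_eq; intros m' _.
    unfold cos_Phi. ring. }
  apply is_RInt_sum_f_R0. intros m _. apply is_RInt_sum_f_R0. intros m' _.
  apply (is_RInt_scal (V:=R_NormedModule)).
  apply (RInt_correct (V:=R_CompleteNormedModule)), ex_RInt_cos_Phi; auto.
Qed.

(** * Blocks *)

Definition log_qT (T : R) : R := ln (qT T).

Definition block_index (T : R) (m : nat) : Z := Int_part (ln (INR m) / log_qT T).

Lemma log_qT_ge T : 0 < T -> 1 / (T + 1) <= log_qT T.
Proof.
  intros hT. unfold log_qT, qT.
  assert (0 < 1 + / T) by (pose proof (Rinv_0_lt_compat T hT); lra).
  pose proof (exp_ineq1_le (- ln (1 + / T))) as h.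
  rewrite exp_Ropp, exp_ln in h by auto.
  replace (/ (1 + / T)) with (T / (T + 1)) in h by (field; lra).
  replace (1 / (T + 1)) with (1 - T / (T + 1)) by (field; lra). lra.
Qed.

Lemma log_qT_pos T : 0 < T -> 0 < log_qT T.
Proof.
  intros hT. pose proof (log_qT_ge T hT).
  assert (0 < 1 / (T + 1)) by (apply Rdiv_lt_0_compat; lra). lra.
Qed.

Lemma exp_le_exp_iff x y : exp x <= exp y <-> x <= y.
Proof.
  split.
  - intros h. destruct (Rle_or_lt x y) as [|hlt]; auto. pose proof (exp_increasing _ _ hlt). lra.
  - intros [h | ->]; [left; apply exp_increasing | right]; auto.
Qed.

Lemma powerRZ_qT T z : 0 < T -> powerRZ (qT T) z = exp (IZR z * log_qT T).
Proof.
  intros hT. rewrite powerRZ_Rpower; [reflexivity|].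
  unfold qT. pose proof (Rinv_0_lt_compat T hT). lra.
Qed.

Lemma powerRZ_qT_le_iff T z x : 0 < T -> 0 < x ->
  (powerRZ (qT T) z <= x <-> IZR z <= ln x / log_qT T).
Proof.
  intros hT hx. rewrite powerRZ_qT, <- (exp_ln x) at 1 by auto. rewrite exp_le_exp_iff.
  apply Rle_div_r, log_qT_pos; auto.
Qed.

Lemma le_powerRZ_qT_iff T z x : 0 < T -> 0 < x ->
  (x <= powerRZ (qT T) z <-> ln x / log_qT T <= IZR z).
Proof.
  intros hT hx. rewrite powerRZ_qT, <- (exp_ln x) at 1 by auto. rewrite exp_le_exp_iff.
  symmetry. apply Rle_div_l, log_qT_pos; auto.
Qed.

Lemma block_index_spec T m :
  IZR (block_index T m) <= ln (INR m) / log_qT T < IZR (block_index T m) + 1.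
Proof. unfold block_index. pose proof (base_Int_part (ln (INR m) / log_qT T)). lra. Qed.

Lemma in_block_iff T j m : 0 < T ->
  (in_block T j m <-> 0 < INR m /\ j = block_index T m).
Proof.
  intros hT. unfold in_block, block_index.
  assert (hpow : forall z, 0 < powerRZ (qT T) z)
    by (intros; apply powerRZ_lt; unfold qT; pose proof (Rinv_0_lt_compat T hT); lra).
  split.
  - intros [h1 h2]. assert (hm : 0 < INR m) by (pose proof (hpow j); lra).
    split; [auto|].
    rewrite powerRZ_qT_le_iff in h1 by auto.
    assert (h2' : ~ (IZR (j + 1) <= ln (INR m) / log_qT T))
      by (rewrite <- powerRZ_qT_le_iff by auto; lra).
    rewrite plus_IZR in h2'. apply Int_part_spec. lra.
  - intros [hm ->]. pose proof (block_index_spec T m) as [hlo hhi]. unfold block_index in *.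
    split; [rewrite powerRZ_qT_le_iff by auto; auto|].
    apply Rnot_le_lt. rewrite powerRZ_qT_le_iff, plus_IZR by auto. lra.
Qed.

Lemma block_index_window T j n : 0 < T -> 0 < INR n ->
  powerRZ (qT T) (j - 1) <= INR n <= powerRZ (qT T) (j + 2) ->
  (block_index T n - 2 <= j <= block_index T n + 1)%Z.
Proof.
  intros hT hn [h1 h2].
  rewrite powerRZ_qT_le_iff in h1 by auto. rewrite le_powerRZ_qT_iff in h2 by auto.
  pose proof (block_index_spec T n).
  assert (hlo : IZR (j - 1) < IZR (block_index T n + 1)) by (rewrite plus_IZR; lra).
  assert (hhi : IZR (block_index T n) <= IZR (j + 2)) by lra.
  apply lt_IZR in hlo. apply le_IZR in hhi. lia.
Qed.

Lemma block_index_spacing T m m' : 0 < T ->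
  (Rabs (IZR (block_index T m) - IZR (block_index T m')) - 1) * log_qT T
  <= Rabs (ln (INR m) - ln (INR m')).
Proof.
  intros hT. pose proof (block_index_spec T m). pose proof (block_index_spec T m').
  pose proof (log_qT_pos T hT).
  set (y := ln (INR m) / log_qT T) in *. set (y' := ln (INR m') / log_qT T) in *.
  replace (ln (INR m) - ln (INR m')) with ((y - y') * log_qT T) by (unfold y, y'; field; lra).
  rewrite Rabs_mult, (Rabs_pos_eq (log_qT T)) by lra.
  apply Rmult_le_compat_r; [lra|].
  unfold Rabs; repeat destruct Rcase_abs; lra.
Qed.

(** * Mean value estimate *)

Definition block_kernel (T : R) (m m' : nat) : R :=
  320 * PI / (1 + (IZR (block_index T m) - IZR (block_index T m')) ^ 2).

Definition tail_error (T A : R) : R :=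
  2 * ((T + 1) + A * (T + 1) ^ 2 / T ^ 2) * Phi (A / T).

Lemma tail_error_nonneg T A : 0 < T -> 0 <= A -> 0 <= tail_error T A.
Proof.
  intros hT hA. unfold tail_error. pose proof (Phi_pos (A / T)).
  assert (0 <= A * (T + 1) ^ 2 / T ^ 2)
    by (apply Rdiv_le_0_compat; [apply Rmult_le_pos|]; nra).
  apply Rmult_le_pos; nra.
Qed.

Lemma tail_error_mul_le T A : 1 <= T -> 1 <= A ->
  tail_error T A * A <= 32 * T ^ 4 * ((T + 1) + (T + 1) ^ 2 / T ^ 2).
Proof.
  intros hT hA. unfold tail_error. set (u := A / T).
  pose proof (Phi_mul_sq_le u). pose proof (Phi_pos u).
  assert (hA4 : A ^ 4 * Phi u <= 16 * T ^ 4).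
  { replace A with (u * T) by (unfold u; field; lra).
    replace ((u * T) ^ 4 * Phi u) with (T ^ 4 * (u ^ 4 * Phi u)) by ring.
    assert (u ^ 4 <= (1 + u ^ 2) * (1 + u ^ 2)) by nra.
    assert (u ^ 4 * Phi u <= 16) by nra.
    assert (0 < T ^ 4) by (apply pow_lt; lra). nra. }
  set (k := (T + 1) ^ 2 / T ^ 2). assert (0 <= k) by (unfold k; apply Rdiv_le_0_compat; nra).
  replace (A * (T + 1) ^ 2 / T ^ 2) with (A * k) by (unfold k; field; lra).
  assert (A <= A ^ 2) by nra.
  assert (A ^ 2 <= A ^ 4) by (replace (A ^ 4) with (A ^ 2 * A ^ 2) by ring; nra).
  assert (A * Phi u <= 16 * T ^ 4) by nra.
  assert (A ^ 2 * Phi u <= 16 * T ^ 4) by nra.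
  replace (2 * (T + 1 + A * k) * Phi u * A) with (2 * ((T + 1) * (A * Phi u) + k * (A ^ 2 * Phi u)))
    by ring.
  assert ((T + 1) * (A * Phi u) <= (T + 1) * (16 * T ^ 4)) by (apply Rmult_le_compat_l; lra).
  assert (k * (A ^ 2 * Phi u) <= k * (16 * T ^ 4)) by (apply Rmult_le_compat_l; lra).
  nra.
Qed.

(* Here [1 / |x| <= (T + 1) / (d - 1)] and [1 + d^2 <= 5 (d - 1)^2] for [d >= 2]. *)
Lemma abs_RInt_cos_Phi_le_spaced T A x d : 1 <= T -> 0 <= A -> 2 <= d ->
  (d - 1) / (T + 1) <= Rabs x ->
  Rabs (RInt (cos_Phi T x) (-A) A) <= T * (320 * PI / (1 + d ^ 2)) + tail_error T A.
Proof.
  intros hT hA hd hx. pose proof PI_RGT_0.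
  assert (hx1 : 1 / (T + 1) <= Rabs x).
  { eapply Rle_trans; [|apply hx]. apply Rmult_le_compat_r; [left; apply Rinv_0_lt_compat|]; lra. }
  assert (hax : 0 < Rabs x) by (assert (0 < 1 / (T + 1)) by (apply Rdiv_lt_0_compat; lra); lra).
  assert (hx0 : x <> 0) by (intros ->; rewrite Rabs_R0 in hax; lra).
  set (y := / Rabs x).
  assert (hy : 0 < y) by (apply Rinv_0_lt_compat; auto).
  assert (hyd : y * (d - 1) <= T + 1).
  { apply Rle_div_l in hx; [|lra]. unfold y.
    apply Rmult_le_reg_r with (Rabs x); [lra|]. field_simplify; lra. }
  assert (hyT : y <= T + 1).
  { apply Rle_div_l in hx1; [|lra]. unfold y.
    apply Rmult_le_reg_r with (Rabs x); [lra|]. field_simplify; lra. }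
  assert (ex2 : x ^ 2 = Rabs x ^ 2) by (rewrite <- !Rsqr_pow2; apply Rsqr_abs).
  eapply Rle_trans; [apply abs_RInt_cos_Phi_le_ibp; auto; lra|].
  replace (16 * PI / (T * x ^ 2)) with (16 * PI * y ^ 2 / T) by (rewrite ex2; unfold y; field; lra).
  replace (A / (T ^ 2 * x ^ 2)) with (A * y ^ 2 / T ^ 2) by (rewrite ex2; unfold y; field; lra).
  apply Rplus_le_compat.
  - assert (h20 : y ^ 2 * (1 + d ^ 2) <= 20 * T ^ 2).
    { assert ((y * (d - 1)) ^ 2 <= (T + 1) ^ 2) by (apply pow_incr; nra).
      assert (1 + d ^ 2 <= 5 * (d - 1) ^ 2) by nra. nra. }
    apply Rmult_le_reg_r with (T * (1 + d ^ 2)); [nra|].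
    replace (16 * PI * y ^ 2 / T * (T * (1 + d ^ 2))) with (16 * PI * (y ^ 2 * (1 + d ^ 2)))
      by (field; lra).
    replace (T * (320 * PI / (1 + d ^ 2)) * (T * (1 + d ^ 2))) with (320 * PI * T ^ 2)
      by (field; nra).
    nra.
  - unfold tail_error. pose proof (Phi_pos (A / T)).
    assert (A * y ^ 2 / T ^ 2 <= A * (T + 1) ^ 2 / T ^ 2).
    { apply Rmult_le_compat_r; [left; apply Rinv_0_lt_compat; nra|].
      apply Rmult_le_compat_l; [lra|]. apply pow_incr; lra. }
    fold y. nra.
Qed.

Lemma abs_RInt_cos_Phi_le_block_kernel T A m m' : 1 <= T -> 0 <= A ->
  Rabs (RInt (cos_Phi T (ln (INR m) - ln (INR m'))) (-A) A)
  <= T * block_kernel T m m' + tail_error T A.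
Proof.
  intros hT hA. pose proof (tail_error_nonneg T A ltac:(lra) hA). pose proof PI_RGT_0.
  unfold block_kernel.
  set (z := (block_index T m - block_index T m')%Z).
  replace (IZR (block_index T m) - IZR (block_index T m')) with (IZR z)
    by (unfold z; apply minus_IZR).
  destruct (Z_le_gt_dec (Z.abs z) 1) as [hz|hz].
  - assert (hz2 : IZR z ^ 2 <= 1).
    { assert (-1 <= IZR z <= 1) by (split; apply IZR_le; lia). nra. }
    pose proof (abs_RInt_cos_Phi_le T (ln (INR m) - ln (INR m')) A ltac:(lra) hA).
    assert (160 * PI <= 320 * PI / (1 + IZR z ^ 2))
      by (apply (Rle_div_r (160 * PI) (320 * PI) (1 + IZR z ^ 2)); nra).
    nra.
  - assert (hd : 2 <= Rabs (IZR z)) by (rewrite <- abs_IZR; apply IZR_le; lia).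
    rewrite <- Rsqr_pow2, Rsqr_abs, Rsqr_pow2.
    apply abs_RInt_cos_Phi_le_spaced; auto.
    pose proof (block_index_spacing T m m' ltac:(lra)) as hsp.
    rewrite <- minus_IZR in hsp. fold z in hsp.
    eapply Rle_trans; [|exact hsp].
    pose proof (log_qT_ge T ltac:(lra)) as hq. unfold Rdiv in hq |- *.
    apply Rmult_le_compat_l; lra.
Qed.

Lemma Z_bounded_on_segment (f : nat -> Z) B :
  exists K : nat, forall m, (m <= B)%nat -> (- Z.of_nat K <= f m <= Z.of_nat K)%Z.
Proof.
  induction B as [|B [K hK]].
  - exists (Z.to_nat (Z.abs (f 0%nat))). intros m hm. replace m with 0%nat by lia. lia.
  - exists (max K (Z.to_nat (Z.abs (f (S B))))). intros m hm.
    destruct (Nat.eq_dec m (S B)) as [->|hne]; [lia|].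
    specialize (hK m ltac:(lia)). lia.
Qed.

Section OnePerBlock.

Variables (T : R) (P : nat -> Prop).
Hypothesis hT : 1 <= T.
Hypothesis block_index_inj :
  forall m1 m2, P m1 -> P m2 -> block_index T m1 = block_index T m2 -> m1 = m2.

Lemma sum_block_kernel_le B m :
  sum_f_R0 (fun m' => ind (P m') * block_kernel T m m') B <= 1920 * PI.
Proof.
  destruct (Z_bounded_on_segment (block_index T) B) as [K hK]. pose proof PI_RGT_0.
  set (g := fun k : Z => 320 * PI / (1 + (IZR (block_index T m) - IZR k) ^ 2)).
  eapply Rle_trans.
  - apply (sum_ind_reindex_le B P (block_index T) (- Z.of_nat K) (2 * K) g).
    + intros m0 hm0 _. specialize (hK m0 hm0). lia.
    + intros m1 m2 _ _. apply block_index_inj.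
    + intros k. unfold g. left. apply Rdiv_lt_0_compat; [lra|].
      pose proof (pow2_ge_0 (IZR (block_index T m) - IZR k)). lra.
  - replace (1920 * PI) with (320 * PI * 6) by ring.
    replace (sum_f_R0 _ (2 * K)) with
      (320 * PI * sum_f_R0 (fun i =>
         1 / (1 + IZR ((- Z.of_nat K - block_index T m) + Z.of_nat i) ^ 2)) (2 * K)).
    + apply Rmult_le_compat_l; [lra|]. apply sum_inv_1_plus_sq_le.
    + rewrite scal_sum. apply sum_eq. intros i _. unfold g.
      rewrite !plus_IZR, !minus_IZR, !opp_IZR.
      replace ((IZR (block_index T m) - (- IZR (Z.of_nat K) + IZR (Z.of_nat i))) ^ 2)
        with ((- IZR (Z.of_nat K) - IZR (block_index T m) + IZR (Z.of_nat i)) ^ 2) by ring.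
      field. pose proof (pow2_ge_0 (- IZR (Z.of_nat K) - IZR (block_index T m) + IZR (Z.of_nat i))).
      lra.
Qed.

Lemma RInt_dirichlet_poly_sq_Phi_le A B (c : nat -> R) : 0 <= A ->
  (forall m, 0 <= c m) -> (forall m, ~ P m -> c m = 0) ->
  RInt (fun t => Cmod (dirichlet_poly c B t) ^ 2 * Phi (t / T)) (-A) A
  <= 1920 * PI * T * sum_f_R0 (fun m => c m ^ 2) B + tail_error T A * (sum_f_R0 c B) ^ 2.
Proof.
  intros hA hc hcP. pose proof PI_RGT_0.
  rewrite (is_RInt_unique _ _ _ _ (is_RInt_dirichlet_poly_sq_Phi T c B (-A) A ltac:(lra))).
  eapply Rle_trans with (sum_f_R0 (fun m => sum_f_R0 (fun m' =>
    T * (c m * c m' * block_kernel T m m') + tail_error T A * (c m * c m')) B) B).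
  { apply sum_Rle; intros m _; apply sum_Rle; intros m' _.
    pose proof (abs_RInt_cos_Phi_le_block_kernel T A m m' hT hA).
    pose proof (Rle_abs (RInt (cos_Phi T (ln (INR m) - ln (INR m'))) (-A) A)).
    assert (0 <= c m * c m') by (apply Rmult_le_pos; auto). nra. }
  rewrite (sum_eq _ _ _ (fun m _ => sum_plus _ _ B)), sum_plus.
  rewrite <- Rsqr_pow2. unfold Rsqr. rewrite sum_f_R0_mult.
  replace (sum_f_R0 (fun m => sum_f_R0 (fun m' => T * (c m * c m' * block_kernel T m m')) B) B)
    with (T * sum_f_R0 (fun m => sum_f_R0 (fun m' => c m * c m' * block_kernel T m m') B) B)
    by (rewrite scal_sum; apply sum_eq; intros;
        rewrite Rmult_comm, scal_sum; apply sum_eq; intros; ring).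
  replace (sum_f_R0 (fun m => sum_f_R0 (fun m' => tail_error T A * (c m * c m')) B) B)
    with (tail_error T A * sum_f_R0 (fun m => sum_f_R0 (fun m' => c m * c m') B) B)
    by (rewrite scal_sum; apply sum_eq; intros;
        rewrite Rmult_comm, scal_sum; apply sum_eq; intros; ring).
  assert (hschur : sum_f_R0 (fun m => sum_f_R0 (fun m' => c m * c m' * block_kernel T m m') B) B
                   <= 1920 * PI * sum_f_R0 (fun m => c m ^ 2) B).
  { apply (schur_test B P); auto.
    - intros. unfold block_kernel. left. apply Rdiv_lt_0_compat; [lra|].
      pose proof (pow2_ge_0 (IZR (block_index T m) - IZR (block_index T m'))). lra.
    - intros. unfold block_kernel. f_equal. f_equal. ring.
    - intros m _ _. apply sum_block_kernel_le. }
  assert (T * sum_f_R0 (fun m => sum_f_R0 (fun m' => c m * c m' * block_kernel T m m') B) B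
          <= T * (1920 * PI * sum_f_R0 (fun m => c m ^ 2) B)) by (apply Rmult_le_compat_l; lra).
  lra.
Qed.

End OnePerBlock.

(** * The coefficients r(m) *)

Definition coeff (gamma a : R) (N : nat) (T : R) (m : nat) : R :=
  ind (inM' gamma a N T m) * rr gamma a N T m.

Definition in_window (T : R) (m n : nat) : Prop :=
  exists j : Z, in_block T j m /\ powerRZ (qT T) (j - 1) <= INR n <= powerRZ (qT T) (j + 2).

Section Coefficients.

Variables (gamma a T : R) (N : nat).
Hypothesis hT : 0 < T.

Lemma inM_pos n : inM gamma a N n -> 0 < INR n.
Proof.
  intros [h _]. destruct n as [|n]; [unfold fM in h; simpl in h; lra|].
  apply lt_0_INR; lia.
Qed.

Lemma inM'_block_index_inj m1 m2 : inM' gamma a N T m1 -> inM' gamma a N T m2 ->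
  block_index T m1 = block_index T m2 -> m1 = m2.
Proof.
  intros [hm1 [j1 [hb1 hmin1]]] [hm2 [j2 [hb2 hmin2]]] e.
  assert (j1 = j2) by (apply in_block_iff in hb1, hb2; auto; lia).
  subst j2. pose proof (hmin1 m2 hm2 hb2). pose proof (hmin2 m1 hm1 hb1). lia.
Qed.

Lemma sum_ind_in_window_le n : inM gamma a N n ->
  sum_f_R0 (fun m => ind (inM' gamma a N T m /\ in_window T m n)) (Bnd gamma N) <= 4.
Proof.
  intros hn. pose proof (inM_pos n hn) as hnp.
  replace (sum_f_R0 _ (Bnd gamma N)) with
    (sum_f_R0 (fun m => ind (inM' gamma a N T m /\ in_window T m n) * 1) (Bnd gamma N))
    by (apply sum_eq; intros; ring).
  eapply Rle_trans.
  - apply (sum_ind_reindex_le (Bnd gamma N) _ (block_index T) (block_index T n - 2) 3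
             (fun _ => 1)).
    + intros m _ [_ [j [hb hw]]]. apply in_block_iff in hb as [_ ->]; auto.
      pose proof (block_index_window T (block_index T m) n hT hnp hw). simpl. lia.
    + intros m m' _ _ [h1 _] [h2 _]. apply inM'_block_index_inj; auto.
    + intros; lra.
  - simpl. lra.
Qed.

(* Each [n] in calM lies in the windows of at most four [m] in calM'. *)
Lemma sum_coeff_sq_le :
  sum_f_R0 (fun m => coeff gamma a N T m ^ 2) (Bnd gamma N)
  <= 4 * sumM gamma a N (fun n => fM gamma N n ^ 2).
Proof.
  set (B := Bnd gamma N).
  assert (e1 : forall m, coeff gamma a N T m ^ 2 =
     sum_f_R0 (fun n => ind (inM' gamma a N T m) *
                        (ind (inM gamma a N n) * (ind (in_window T m n) * fM gamma N n ^ 2))) B).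
  { intros m. unfold coeff, rr, sumM. fold B.
    rewrite Rpow_mult_distr, pow2_sqrt.
    - replace (ind (inM' gamma a N T m) ^ 2) with (ind (inM' gamma a N T m))
        by (unfold ind; destruct excluded_middle_informative; ring).
      rewrite scal_sum. apply sum_eq; intros. unfold in_window. ring.
    - apply cond_pos_sum. intros.
      apply Rmult_le_pos; [|apply Rmult_le_pos]; auto using ind_nonneg, pow2_ge_0. }
  rewrite (sum_eq _ _ _ (fun m _ => e1 m)), sum_f_R0_swap.
  unfold sumM. fold B. rewrite scal_sum.
  apply sum_Rle. intros n hn.
  replace (sum_f_R0 _ B) with (ind (inM gamma a N n) * fM gamma N n ^ 2 *
             sum_f_R0 (fun m => ind (inM' gamma a N T m /\ in_window T m n)) B)
    by (rewrite scal_sum; apply sum_eq; intros m _; rewrite <- ind_and; ring).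
  destruct (classic (inM gamma a N n)) as [h|h].
  - rewrite (ind_true _ h). pose proof (sum_ind_in_window_le n h) as hcount. fold B in hcount.
    pose proof (pow2_ge_0 (fM gamma N n)). nra.
  - rewrite (ind_false _ h). lra.
Qed.

End Coefficients.

Lemma coeff_nonneg gamma a N T m : 0 <= coeff gamma a N T m.
Proof. apply Rmult_le_pos; [apply ind_nonneg | apply sqrt_pos]. Qed.

Lemma coeff_out gamma a N T m : ~ inM' gamma a N T m -> coeff gamma a N T m = 0.
Proof. intros hm. unfold coeff. rewrite ind_false by auto. ring. Qed.

Lemma integrand_eq gamma a kappa T t :
  integrand gamma a kappa T t
  = Cmod (dirichlet_poly (coeff gamma a (Nof kappa T) T) (Bnd gamma (Nof kappa T)) t) ^ 2
    * Phi (t / T).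
Proof. reflexivity. Qed.

Lemma integrand_nonneg gamma a kappa T t : 0 <= integrand gamma a kappa T t.
Proof. rewrite integrand_eq. apply Rmult_le_pos; [apply pow2_ge_0 | left; apply Phi_pos]. Qed.

Lemma ex_RInt_integrand gamma a kappa T x y : 0 < T -> ex_RInt (integrand gamma a kappa T) x y.
Proof. intros hT. eexists. apply is_RInt_dirichlet_poly_sq_Phi; auto. Qed.

Lemma RInt_integrand_le gamma a kappa T A : 1 <= T -> 1 <= A ->
  let N := Nof kappa T in
  RInt (integrand gamma a kappa T) (-A) A
  <= 7680 * PI * T * sumM gamma a N (fun n => fM gamma N n ^ 2)
     + 32 * T ^ 4 * ((T + 1) + (T + 1) ^ 2 / T ^ 2)
       * sum_f_R0 (coeff gamma a N T) (Bnd gamma N) ^ 2 / A.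
Proof.
  intros hT hA N. rewrite (RInt_ext _ _ _ _ (fun t _ => integrand_eq gamma a kappa T t)). fold N.
  pose proof (RInt_dirichlet_poly_sq_Phi_le T (inM' gamma a N T) hT
                (inM'_block_index_inj gamma a T N ltac:(lra)) A (Bnd gamma N) (coeff gamma a N T)
                ltac:(lra) (coeff_nonneg gamma a N T) (coeff_out gamma a N T)) as hmean.
  pose proof (sum_coeff_sq_le gamma a T N ltac:(lra)) as hcoeff.
  pose proof (tail_error_mul_le T A hT hA) as htail. apply Rle_div_r in htail; [|lra].
  set (c := coeff gamma a N T) in *. set (B := Bnd gamma N) in *.
  set (W := 32 * T ^ 4 * ((T + 1) + (T + 1) ^ 2 / T ^ 2)) in *.
  assert (1920 * PI * T * sum_f_R0 (fun m => c m ^ 2) B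
          <= 1920 * PI * T * (4 * sumM gamma a N (fun n => fM gamma N n ^ 2)))
    by (pose proof PI_RGT_0; apply Rmult_le_compat_l; nra).
  assert (tail_error T A * sum_f_R0 c B ^ 2 <= W / A * sum_f_R0 c B ^ 2)
    by (apply Rmult_le_compat_r; [apply pow2_ge_0 | auto]).
  replace (W * sum_f_R0 c B ^ 2 / A) with (W / A * sum_f_R0 c B ^ 2) by (field; lra).
  lra.
Qed.

Theorem lemma5 (gamma a kappa : R)
  (hg : 0 < gamma < 1) (ha : 1 < a < / gamma) (hk : 0 < kappa <= 1) :
  exists C : R, 0 < C /\
  exists T0 : R, forall T : R, T0 <= T ->
    exists I : R,
      is_RInt_gen (integrand gamma a kappa T)
        (Rbar_locally m_infty) (Rbar_locally p_infty) I /\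
      I <= C * T * sumM gamma a (Nof kappa T) (fun n => fM gamma (Nof kappa T) n ^ 2).
Proof.
  exists (7680 * PI). split; [pose proof PI_RGT_0; lra|].
  exists 1. intros T hT.
  eapply is_RInt_gen_nonneg_le_symmetric.
  - intros x y. apply ex_RInt_integrand. lra.
  - apply integrand_nonneg.
  - intros A hA. apply RInt_integrand_le; auto.
Qed.
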